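(* Let $\mathcal{M}$ be the set of compactly supported probability distributions on $\mathbb{R}$ and let $\mathcal{U}=\{T^u: u \text{ a utility function}\}$. Let $T:\mathcal{M}\to\mathcal{M}$ be monotone. Then $\mathcal{U}\circ T=T\circ\mathcal{U}$ if and only if $T=T_d\circ T^u$ for some distortion function $d$ and some utility function $u$ that is strictly increasing and surjective ($u(\mathbb{R})=\mathbb{R}$).
   Context: Increasing means non-decreasing. A distortion function is an increasing function $d:[0,1]\to[0,1]$ with $d(0)=0$, $d(1)=1$. A utility function is an increasing continuous $u:\mathbb{R}\to\mathbb{R}$. $T_d(F)(x)=\lim_{y\downarrow x}d(F(y))$; $T^u(F)=F\circ u^{-1}$ is the distribution of $u(X)$ when $X\sim F$. For a set $\mathcal{T}$ of maps $\mathcal{M}\to\mathcal{M}$, $\mathcal{T}\circ T=\{T'\circ T:T'\in\mathcal{T}\}$ and $T\circ\mathcal{T}=\{T\circ T':T'\in\mathcal{T}\}$. For $F,G\in\mathcal{M}$, $F\le_{\rm st}G$ means $F(x)\ge G(x)$ for all $x$; $T$ is monotone if $F\le_{\rm st}G$ implies $T(F)\le_{\rm st}T(G)$. *)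

From HB Require Import structures.
From mathcomp Require Import all_boot all_order all_algebra.
From mathcomp Require Import all_classical all_reals all_analysis.
Set Implicit Arguments. Unset Strict Implicit. Unset Printing Implicit Defensive.
Import Order.TTheory GRing.Theory Num.Theory.
Import numFieldNormedType.Exports.
Local Open Scope classical_set_scope.
Local Open Scope ring_scope.

Section Defs.
Variable R : realType.

(* A distribution on R is represented by its CDF F : R -> R. *)
Definition in_M (F : R -> R) : Prop :=
  {homo F : x y / x <= y} /\
  (forall x, F y @[y --> x^'+] --> F x) /\
  exists a b : R, (forall x, x < a -> F x = 0) /\ (forall x, b <= x -> F x = 1).

(* Distortion function d : [0,1] -> [0,1] (values outside [0,1] irrelevant). *)
Definition distortion (d : R -> R) : Prop :=
  (forall x y, 0 <= x -> x <= y -> y <= 1 -> d x <= d y) /\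
  (forall x, 0 <= x -> x <= 1 -> 0 <= d x /\ d x <= 1) /\
  d 0 = 0 /\ d 1 = 1.

Definition utility (u : R -> R) : Prop :=
  {homo u : x y / x <= y} /\ continuous u.

Definition st_le (F G : R -> R) : Prop := forall x, G x <= F x.

Definition monotone_op (T : (R -> R) -> (R -> R)) : Prop :=
  forall F G, in_M F -> in_M G -> st_le F G -> st_le (T F) (T G).

Definition Td (d : R -> R) (F : R -> R) : R -> R :=
  fun x => lim ((d \o F) @ x^'+).

(* T^u(F) = F o u^{-1}: the CDF of u(X) when X ~ F, i.e.
   P(u(X) <= y) = P(X \in {x | u x <= y}); for continuous increasing u the
   set {x | u x <= y} is empty, all of R, or a closed half-line (-oo, a],
   so this probability is sup {F x | u x <= y} (and 0 if the set is empty). *)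
Definition Tu (u : R -> R) (F : R -> R) : R -> R :=
  fun y => if pselect (exists x, u x <= y)
           then sup (F @` [set x | u x <= y]) else 0.

Definition eq_on_M (T1 T2 : (R -> R) -> (R -> R)) : Prop :=
  forall F, in_M F -> T1 F = T2 F.

Definition UT_eq_TU (T : (R -> R) -> (R -> R)) : Prop :=
  (forall u, utility u -> exists v, utility v /\
      eq_on_M (fun F => Tu u (T F)) (fun F => T (Tu v F))) /\
  (forall v, utility v -> exists u, utility u /\
      eq_on_M (fun F => Tu u (T F)) (fun F => T (Tu v F))).

End Defs.

(* Both directions rest on the commutation T^w o T_d = T_d o T^w, valid for every
   distortion d and utility w: at a level t of w both sides are the right limit of
   d o H at the largest point m with w m <= t.  For u strictly increasing and onto,
   with inverse psi, T^u F = F o psi, so T = T_d o T^u intertwines T^w with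
   T^(psi o w o u).
   Conversely, commuting with constant utilities shows that every point mass is the
   image of a point mass, and monotonicity of T then forces T(delta_y) = delta_(phi y)
   for an onto, nondecreasing phi; commuting with affine utilities makes phi strictly
   increasing and shows that T(q delta_a + (1-q) delta_b) is constant, equal to
   d(q), on [phi a, phi b).  Squeezing an arbitrary F between two such two-point
   laws, stochastically and using monotonicity of T, yields T F = T_d (T^phi F). *)

From HB Require Import structures.
From mathcomp Require Import all_boot all_order all_algebra.
From mathcomp Require Import all_classical all_reals all_analysis.
From mathcomp Require Import lra.
Set Implicit Arguments. Unset Strict Implicit. Unset Printing Implicit Defensive.
Import Order.TTheory GRing.Theory Num.Theory.
Import numFieldNormedType.Exports.
Local Open Scope classical_set_scope.
Local Open Scope ring_scope.

Definition intertwines {R : realType} (T : (R -> R) -> (R -> R)) (u v : R -> R) :=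
  eq_on_M (fun F => Tu u (T F)) (fun F => T (Tu v F)).

Section Cdf.
Variable R : realType.
Implicit Types (F G u : R -> R) (a b c t z : R).

Lemma in_M_range F : in_M F -> forall x, 0 <= F x <= 1.
Proof.
case=> Fhomo [_ [a [b [F0 F1]]]] x.
have Fa : F (a - 1) = 0 by apply: F0; rewrite ltrBlDr ltrDl.
have Fb : F (b + 1) = 1 by apply: F1; rewrite lerDl.
apply/andP; split.
  have [xa|ax] := ltP x a; first by rewrite F0.
  by rewrite -Fa; apply: Fhomo; rewrite lerBlDr (le_trans ax) // lerDl.
have [xb|bx] := ltP x b; last by rewrite F1.
by rewrite -Fb; apply: Fhomo; rewrite (le_trans (ltW xb)) // lerDl.
Qed.

Lemma le_Tu u F t z : (forall x, F x <= 1) -> u z <= t -> F z <= Tu u F t.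
Proof.
move=> F1 uzt; rewrite /Tu; case: pselect => [?|nE]; last by exfalso; apply: nE; exists z.
apply: sup_upper_bound; last by exists z.
by split; [exists (F z), z | exists 1 => _ [x _ <-]].
Qed.

Lemma Tu_le u F t c :
  0 <= c -> (forall z, u z <= t -> F z <= c) -> Tu u F t <= c.
Proof.
move=> c0 Fc; rewrite /Tu; case: pselect => // -[z uzt].
by apply: ge_sup; [exists (F z), z | move=> _ [x ux <-]; exact: Fc].
Qed.

Section TuRange.
Variables (u F : R -> R).
Hypothesis F01 : forall x, 0 <= F x <= 1.

Let F0 x : 0 <= F x. Proof. by case/andP: (F01 x). Qed.
Let F1 x : F x <= 1. Proof. by case/andP: (F01 x). Qed.

Lemma Tu_ge0 t : 0 <= Tu u F t.
Proof.
have [[z uzt]|nE] := pselect (exists z, u z <= t).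
  exact: le_trans (F0 z) (le_Tu F1 uzt).
by rewrite /Tu; case: pselect.
Qed.

Lemma Tu_le1 t : Tu u F t <= 1.
Proof. exact: Tu_le ler01 (fun z _ => F1 z). Qed.

Lemma Tu_range t : 0 <= Tu u F t <= 1.
Proof. by rewrite Tu_ge0 Tu_le1. Qed.

Lemma Tu_homo : {homo Tu u F : s t / s <= t}.
Proof.
move=> s t st; apply: Tu_le; first exact: Tu_ge0.
by move=> z uzs; apply: le_Tu F1 (le_trans uzs st).
Qed.

Lemma Tu_eq0 a t : {homo u : x y / x <= y} -> (forall x, x < a -> F x = 0) ->
  t < u a -> Tu u F t = 0.
Proof.
move=> uhomo Fa ta; apply/le_anti; rewrite Tu_ge0 andbT.
apply: Tu_le => // z uzt; rewrite Fa //; rewrite ltNge; apply/negP => /uhomo az.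
by move: (le_lt_trans (le_trans az uzt) ta); rewrite ltxx.
Qed.

Lemma Tu_eq1 b t : (forall x, b <= x -> F x = 1) -> u b <= t -> Tu u F t = 1.
Proof.
move=> Fb bt; apply/le_anti; rewrite Tu_le1 /=.
by rewrite -(Fb b) // le_Tu.
Qed.

Lemma Tu_eq_max m t : {homo F : x y / x <= y} ->
  u m <= t -> (forall z, u z <= t -> z <= m) -> Tu u F t = F m.
Proof.
move=> Fhomo umt mmax; apply/le_anti; rewrite le_Tu // andbT.
by apply: Tu_le => // z /mmax; exact: Fhomo.
Qed.

End TuRange.

Lemma Tu_strict_cancel u psi G : {homo u : x y / x < y} -> cancel psi u ->
  {homo G : x y / x <= y} -> (forall x, 0 <= G x <= 1) -> Tu u G = G \o psi.
Proof.
move=> ustrict psiK Ghomo G01; apply/funext => t.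
apply: Tu_eq_max => // [|z]; first by rewrite psiK.
by rewrite -{1}(psiK t) (le_mono ustrict).
Qed.

End Cdf.

(* The CDF of q delta_a + (1 - q) delta_b when a <= b. *)
Definition two_step {R : realType} (a b q : R) : R -> R :=
  fun t => if t < a then 0 else if t < b then q else 1.

Notation point_mass c := (two_step c c 1).

Section TwoStep.
Variable R : realType.
Implicit Types (G v : R -> R) (a b c q : R).

Lemma two_step_range a b q : 0 <= q <= 1 -> forall t, 0 <= two_step a b q t <= 1.
Proof.
by move=> q01 t; rewrite /two_step; case: ifP => _; [|case: ifP => _]; rewrite ?lexx ?ler01.
Qed.

Lemma two_step_homo a b q : a <= b -> 0 <= q <= 1 -> {homo two_step a b q : x y / x <= y}.
Proof.
move=> ab /andP[q0 q1] x y xy; rewrite /two_step.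
have [ya|ay] := ltP y a; first by rewrite (le_lt_trans xy ya).
have [xa|ax] := ltP x a; first by case: ifP.
have [yb|by_] := ltP y b; first by rewrite (le_lt_trans xy yb).
by case: ifP.
Qed.

Lemma two_step_in_M a b q : a <= b -> 0 <= q <= 1 -> in_M (two_step a b q).
Proof.
move=> ab q01; split; first exact: two_step_homo.
split; last first.
  exists a, b; split => x xab; rewrite /two_step ?xab //.
  by rewrite !ifF //; apply/negbTE; rewrite -leNgt // (le_trans ab).
move=> x; apply: cvg_near_cst; rewrite /two_step.
have [xa|ax] := ltP x a.
  by near=> y; rewrite ifT //; near: y; exact: nbhs_right_lt.
have ay : \forall y \near x^'+, (y < a) = false.
  by near=> y; apply/negbTE; rewrite -leNgt (le_trans ax) //; near: y; exact: nbhs_right_ge.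
have [xb|bx] := ltP x b.
  by near=> y; rewrite (near ay) // ifT //; near: y; exact: nbhs_right_lt.
near=> y; rewrite (near ay) // ifF //.
by apply/negbTE; rewrite -leNgt (le_trans bx) //; near: y; exact: nbhs_right_ge.
Unshelve. all: end_near.
Qed.

Lemma Tu_two_step v a b q : {homo v : x y / x <= y} -> a <= b -> 0 <= q <= 1 ->
  Tu v (two_step a b q) = two_step (v a) (v b) q.
Proof.
move=> vhomo ab q01; have B01 := two_step_range a b q01.
have B1 x : two_step a b q x <= 1 by case/andP: (B01 x).
case/andP: (q01) => q0 _.
apply/funext => t; rewrite {2}/two_step.
have [ta|at_] := ltP t (v a).
  by apply: (Tu_eq0 B01 vhomo _ ta) => x xa; rewrite /two_step xa.
have [tb|bt] := ltP t (v b); last first.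
  by apply: (Tu_eq1 B01 _ bt) => x bx; rewrite /two_step !ifF //; apply/negbTE;
    rewrite -leNgt // (le_trans ab).
have ab' : a < b by rewrite lt_neqAle ab andbT; apply: contraTneq tb => <-; rewrite -leNgt.
apply/le_anti/andP; split.
  apply: Tu_le => // z vzt; rewrite /two_step; case: ifP => // _.
  rewrite ifT // ltNge; apply/negP => /vhomo bz.
  by move: (le_lt_trans (le_trans bz vzt) tb); rewrite ltxx.
have := le_Tu B1 at_.
by rewrite /two_step ltxx ab'.
Qed.

Lemma point_mass_inj c c' : point_mass c = point_mass c' -> c = c'.
Proof.
move=> e; move: (congr1 (fun f => f c) e) (congr1 (fun f => f c') e).
by rewrite /two_step !ltxx; case: ltP; case: ltP; lra.
Qed.

Lemma st_le_point_mass a b : a <= b -> st_le (point_mass a) (point_mass b).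
Proof.
move=> ab x; rewrite /two_step; case: ltP => xb; case: ltP => xa //; rewrite ?lexx ?ler01 //.
by move: (le_lt_trans (le_trans ab xb) xa); rewrite ltxx.
Qed.

Lemma st_le_two_step_mass a b q q' : q <= q' -> st_le (two_step a b q') (two_step a b q).
Proof. by move=> qq' t; rewrite /two_step; case: ifP => _; [|case: ifP => _]. Qed.

Lemma Tu_cst c G : in_M G -> Tu (fun=> c) G = point_mass c.
Proof.
move=> GM; have G01 := in_M_range GM; case: GM => _ [_ [a [b [Ga Gb]]]].
apply/funext => t; rewrite /two_step; case: ltP => tc; last exact: Tu_eq1 Gb tc.
by apply: (Tu_eq0 G01 _ Ga tc) => x y; rewrite lexx.
Qed.

Lemma point_mass_in_M c : in_M (point_mass c).
Proof. by apply: two_step_in_M; rewrite ?lexx ?ler01. Qed.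

Lemma in_M_point_mass G : in_M G ->
  (forall c, (forall t, t < c -> G t = 0) \/ (forall t, c <= t -> G t = 1)) ->
  exists c, G = point_mass c.
Proof.
move=> GM G0or1; have G01 := in_M_range GM.
case: GM => Ghomo [Grc [a [b [Ga Gb]]]].
set S := [set t | G t = 0].
have supS : has_sup S.
  split; first by exists (a - 1); apply: Ga; rewrite ltrBlDr ltrDl.
  exists b => t St; rewrite leNgt; apply/negP => /ltW /Gb.
  by rewrite St => /eqP; rewrite eq_sym oner_eq0.
have G1 t : sup S < t -> G t = 1.
  move=> St; case: (G0or1 t) => [Gt|]; last exact.
  have /(sup_upper_bound supS) : S ((sup S + t) / 2) by apply: Gt; lra.
  lra.
exists (sup S); apply/funext => t; rewrite /two_step.
have [tS|St] := ltP t (sup S).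
  have [e Se te] : exists2 e, S e & sup S - (sup S - t) < e.
    by apply: sup_adherent supS; rewrite subr_gt0.
  apply/le_anti/andP; split; last by case/andP: (G01 t).
  by rewrite -Se; apply: Ghomo; lra.
have [->|tS] := eqVneq t (sup S); last by apply: G1; rewrite lt_neqAle eq_sym tS.
rewrite -(cvg_lim _ (Grc (sup S))) //; apply: cvg_lim => //; apply: cvg_near_cst.
by near=> z; apply: G1; near: z; exact: nbhs_right_gt.
Unshelve. all: end_near.
Qed.

End TwoStep.

Section Utility.
Variable R : realType.
Implicit Types (u v w : R -> R) (a b c p q t : R).

Lemma utility_cst c : utility (fun=> c).
Proof. by split; [move=> ? ? _; exact: lexx | exact: cst_continuous]. Qed.

Lemma utility_comp u v : utility u -> utility v -> utility (u \o v).
Proof.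
case=> uhomo ucont [vhomo vcont]; split; first by move=> x y /vhomo /uhomo.
by move=> x; apply: continuous_comp; [exact: vcont | exact: ucont].
Qed.

Lemma utility_affine a b p q : a < b -> p < q ->
  exists v, [/\ utility v, {homo v : x y / x < y}, v a = p & v b = q].
Proof.
move=> ab pq; set k := (q - p) / (b - a).
have k0 : 0 < k by apply: divr_gt0; rewrite subr_gt0.
have vstrict : {homo (fun z => p + (z - a) * k) : x y / x < y}.
  by move=> x y xy; rewrite ltrD2l ltr_pM2r // ltrD2r.
exists (fun z => p + (z - a) * k); split => //.
- split; first exact: ltW_homo.
  move=> x; apply: cvgD; first exact: cvg_cst.
  by apply: cvgM; [apply: cvgB; [exact: cvg_id | exact: cvg_cst] | exact: cvg_cst].
- by rewrite subrr mul0r addr0.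
- by rewrite /k mulrCA mulfV ?mulr1 ?subrKC // subr_eq0 gt_eqF.
Qed.

Lemma homo_surj_continuous u : {homo u : x y / x <= y} ->
  (forall z, exists x, u x = z) -> continuous u.
Proof.
move=> uhomo usurj x; apply/cvgrPdist_lt => e e0.
have [x1 ux1] := usurj (u x - e / 2); have [x2 ux2] := usurj (u x + e / 2).
have x1x : x1 < x by rewrite ltNge; apply/negP => /uhomo; rewrite ux1; lra.
have xx2 : x < x2 by rewrite ltNge; apply/negP => /uhomo; rewrite ux2; lra.
near=> z.
have : z \in `]x1, x2[ by near: z; apply: near_in_itvoo; rewrite in_itv /= x1x xx2.
rewrite in_itv /= => /andP[/ltW/uhomo + /ltW/uhomo]; rewrite ux1 ux2 => z1 z2.
rewrite ltr_norml; apply/andP; split; lra.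
Unshelve. all: end_near.
Qed.

Lemma utility_level_max w t z0 z1 : utility w -> w z0 <= t -> t < w z1 ->
  exists m, w m <= t /\ forall z, w z <= t -> z <= m.
Proof.
case=> whomo wcont wz0 wz1; set S := [set z | w z <= t].
have Sz1 : ubound S z1.
  move=> z Sz; rewrite leNgt; apply/negP => /ltW /whomo wz.
  by move: (le_lt_trans (le_trans wz Sz) wz1); rewrite ltxx.
have supS : has_sup S by split; [exists z0 | exists z1].
exists (sup S); split; last by move=> z Sz; exact: sup_upper_bound.
rewrite leNgt; apply/negP => tw.
have /nbhs_ballP[e e0 tw_near] : nbhs (sup S) (fun x => t < w x).
  exact: cvgr_gt _ (wcont (sup S)) _ tw.
have [s Ss es] := sup_adherent e0 supS.
have /tw_near ts : ball (sup S) e s.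
  by rewrite -ball_normE /ball_ /= ger0_norm ?subr_ge0 ?sup_upper_bound //; lra.
by move: (lt_le_trans ts Ss); rewrite ltxx.
Qed.

End Utility.

Lemma distortion_id {R : realType} : distortion (@id R).
Proof. by split=> //; split. Qed.

Lemma Td_near_cst {R : realType} (d H : R -> R) x c :
  (\forall y \near x^'+, H y = c) -> Td d H x = d c.
Proof.
move=> Hc; apply: cvg_lim => //; apply: cvg_near_cst.
by near=> y; rewrite /= (near Hc y).
Unshelve. all: end_near.
Qed.

Section RightRegularization.
Variables (R : realType) (d H : R -> R).
Hypotheses (hd : distortion d) (Hhomo : {homo H : x y / x <= y})
  (H01 : forall x, 0 <= H x <= 1).

Let dH_homo x y : x <= y -> d (H x) <= d (H y).
Proof.
case: hd => dhomo _ xy; have /andP[Hx0 Hx1] := H01 x; have /andP[Hy0 Hy1] := H01 y.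
by apply: dhomo => //; exact: Hhomo.
Qed.

Let dH_range x : 0 <= d (H x) <= 1.
Proof. by case: hd => _ [d01 _]; have /andP[? ?] := H01 x; apply/andP; apply: d01. Qed.

Lemma Td_cvg x : (d \o H) y @[y --> x^'+] --> Td d H x.
Proof.
apply: nondecreasing_at_right_is_cvgr; near=> y; first by move=> a b _ _; exact: dH_homo.
by exists 0 => _ [z _ <-]; case/andP: (dH_range z).
Unshelve. all: end_near.
Qed.

Lemma Td_le x y : x < y -> Td d H x <= d (H y).
Proof.
move=> xy; apply: limr_le; first exact: cvgP _ (@Td_cvg x).
near=> z; apply: dH_homo; apply: ltW; near: z; exact: nbhs_right_lt.
Unshelve. all: end_near.
Qed.

Lemma le_Td x c : (forall y, x < y -> c <= d (H y)) -> c <= Td d H x.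
Proof.
move=> cdH; apply: limr_ge; first exact: cvgP _ (@Td_cvg x).
by near=> y; apply: cdH; near: y; exact: nbhs_right_gt.
Unshelve. all: end_near.
Qed.

Lemma Td_homo : {homo Td d H : x y / x <= y}.
Proof. by move=> x y xy; apply: le_Td => z yz; apply: Td_le; exact: le_lt_trans yz. Qed.

Lemma Td_range x : 0 <= Td d H x <= 1.
Proof.
apply/andP; split; first by apply: le_Td => y _; case/andP: (dH_range y).
by apply: le_trans (Td_le (ltr_pwDr ltr01 (lexx x))) _; case/andP: (dH_range (x + 1)).
Qed.

End RightRegularization.

Section UtilityCommutesWithDistortion.
Variables (R : realType) (d H w : R -> R) (a b : R).
Hypotheses (hd : distortion d) (Hhomo : {homo H : x y / x <= y})
  (H01 : forall x, 0 <= H x <= 1)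
  (Ha : forall x, x < a -> H x = 0) (Hb : forall x, b <= x -> H x = 1)
  (hw : utility w).

Let K01 := Td_range hd Hhomo H01.
Let Khomo := Td_homo hd Hhomo H01.
Let P01 := Tu_range w H01.
Let Phomo := Tu_homo w H01.

Lemma Tu_Td : Tu w (Td d H) = Td d (Tu w H).
Proof.
case: (hd) => dhomo [_ [d0 d1]]; case: (hw) => whomo wcont.
apply/funext => t.
have [tw|/existsNP[z0 /negP]] := pselect (forall z, t < w z).
  have -> : Tu w (Td d H) t = 0.
    by apply/le_anti; rewrite Tu_ge0 // andbT; apply: Tu_le => // z; rewrite leNgt tw.
  rewrite -d0; apply/esym/Td_near_cst; near=> s; apply: (Tu_eq0 H01 whomo Ha).
  by near: s; exact: nbhs_right_lt.
rewrite -leNgt => z0t.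
have [wt|/existsNP[z1 /negP]] := pselect (forall z, w z <= t).
  have K1 x : b <= x -> Td d H x = 1.
    move=> bx; rewrite -d1; apply: Td_near_cst; near=> y; apply: Hb.
    by apply: le_trans bx _; near: y; exact: nbhs_right_ge.
  rewrite (Tu_eq1 K01 K1 (wt b)) -d1; apply/esym/Td_near_cst; near=> s.
  by apply: (Tu_eq1 H01 Hb); apply: le_trans (wt b) _; near: s; exact: nbhs_right_ge.
rewrite -ltNge => tz1.
have [m [wmt mmax]] := utility_level_max hw z0t tz1.
rewrite (Tu_eq_max K01 Khomo wmt mmax); apply/le_anti/andP; split.
  apply: (le_Td hd Phomo P01) => s ts.
  have wzs : nbhs m (fun z => w z < s) by exact: cvgr_lt _ (wcont m) _ (le_lt_trans wmt ts).
  have [z [wzs' mz]] : exists z, w z < s /\ m < z.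
    apply: (@filter_ex _ (m^'+)); near=> z; split; last by near: z; exact: nbhs_right_gt.
    by near: z; apply: filterS wzs => z wzs _.
  apply: le_trans (Td_le hd Hhomo H01 mz) _; apply: dhomo; last by case/andP: (P01 s).
  - by case/andP: (H01 z).
  - by apply: le_Tu (ltW wzs') => x; case/andP: (H01 x).
apply: (le_Td hd Hhomo H01) => y my.
have twy : t < w y by rewrite ltNge; apply/negP => /mmax; rewrite leNgt my.
have /andP[ts swy] : t < (t + w y) / 2 < w y by apply/andP; split; lra.
apply: le_trans (Td_le hd Phomo P01 ts) _; apply: dhomo; first exact: Tu_ge0.
- apply: Tu_le => [|z wzs]; first by case/andP: (H01 y).
  apply: Hhomo; rewrite leNgt; apply/negP => /ltW /whomo wyz.
  by move: (le_lt_trans (le_trans wyz wzs) swy); rewrite ltxx.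
- by case/andP: (H01 y).
Unshelve. all: end_near.
Qed.

End UtilityCommutesWithDistortion.

Lemma Tu_in_M {R : realType} (v F : R -> R) : utility v -> in_M F -> in_M (Tu v F).
Proof.
move=> hv FM; have F01 := in_M_range FM; case: (FM) => Fhomo [Frc [a [b [Fa Fb]]]].
have TdF : Td id F = F by apply/funext => x; exact: cvg_lim (Frc x).
have [vhomo _] := hv.
split; first exact: Tu_homo.
split; last by exists (v a), (v b); split => t; [exact: Tu_eq0 | exact: Tu_eq1].
(* Right-continuity of F means F = T_id F, and T^v commutes with T_id. *)
move=> t; rewrite -{2}TdF (Tu_Td distortion_id Fhomo F01 Fa Fb hv).
exact: Td_cvg distortion_id (Tu_homo v F01) (Tu_range v F01) t.
Qed.

Section Sufficiency.
Variables (R : realType) (d phi psi : R -> R).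
Hypotheses (hd : distortion d) (hphi : utility phi)
  (phi_strict : {homo phi : x y / x < y}) (psiK : cancel psi phi).

Let phi_mono : {mono phi : x y / x <= y}. Proof. exact: le_mono. Qed.

Let phiK : cancel phi psi. Proof. by move=> x; apply: (inc_inj phi_mono); rewrite psiK. Qed.

Let psi_mono : {mono psi : x y / x <= y}.
Proof. by move=> x y; rewrite -phi_mono !psiK. Qed.

Let psi_homo : {homo psi : x y / x <= y}.
Proof. by move=> x y; rewrite psi_mono. Qed.

Let hpsi : utility psi.
Proof.
by split; last apply: homo_surj_continuous psi_homo (fun z => ex_intro _ (phi z) (phiK z)).
Qed.

Let conj_utility w : utility w -> utility (psi \o w \o phi).
Proof. by move=> hw; apply: utility_comp (utility_comp hpsi hw) hphi. Qed.

Lemma Tu_conj w F : utility w -> in_M F ->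
  Tu (psi \o w \o phi) F \o psi = Tu w (F \o psi).
Proof.
move=> [whomo _] FM; have F01 := in_M_range FM.
have F1 x : F x <= 1 by case/andP: (F01 x).
apply/funext => s /=; apply/le_anti/andP; split.
  apply: Tu_le => [|z /= wzs]; first by apply: Tu_ge0 => x; exact: F01.
  rewrite -phi_mono !psiK in wzs.
  by have := le_Tu (fun x => F1 (psi x)) wzs; rewrite /= phiK.
apply: Tu_le => [|z wzs]; first exact: Tu_ge0.
by apply: (le_Tu F1) => /=; rewrite psiK; exact: psi_homo.
Qed.

Lemma Tu_Td_Tu w F : utility w -> in_M F ->
  Tu w (Td d (Tu phi F)) = Td d (Tu phi (Tu (psi \o w \o phi) F)).
Proof.
move=> hw FM; have F01 := in_M_range FM; case: (FM) => Fhomo [_ [a [b [Fa Fb]]]].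
have vM : in_M (Tu (psi \o w \o phi) F) by exact: Tu_in_M (conj_utility hw) FM.
have [Ghomo _] := vM.
rewrite (Tu_strict_cancel phi_strict psiK Fhomo F01).
rewrite (Tu_strict_cancel phi_strict psiK Ghomo (in_M_range vM)) Tu_conj //.
apply: (Tu_Td (a := phi a) (b := phi b)) => // [x y /psi_homo|x|x|x]; rewrite /=.
- exact: Fhomo.
- exact: F01.
- by move=> xa; apply: Fa; rewrite -(phiK a) (leW_mono psi_mono).
- by move=> bx; apply: Fb; rewrite -(phiK b) psi_mono.
Qed.

Lemma UT_eq_TU_Td_Tu T : eq_on_M T (fun F => Td d (Tu phi F)) -> UT_eq_TU T.
Proof.
move=> hT.
have commute w : utility w -> intertwines T w (psi \o w \o phi).
  move=> hw F FM; rewrite /= hT // hT ?Tu_Td_Tu //.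
  exact: Tu_in_M (conj_utility hw) FM.
split=> [w hw|v hv].
  by exists (psi \o w \o phi); split; [exact: conj_utility | exact: commute].
have hu : utility (phi \o v \o psi) by apply: utility_comp (utility_comp hphi hv) hpsi.
have vE : psi \o (phi \o v \o psi) \o phi = v by apply/funext => z /=; rewrite !phiK.
by exists (phi \o v \o psi); split=> //; rewrite -{2}vE; exact: commute.
Qed.

End Sufficiency.

Section Necessity.
Variables (R : realType) (T : (R -> R) -> (R -> R)).
Hypotheses (hTM : forall F, in_M F -> in_M (T F)) (hTmono : monotone_op T).
Hypotheses (hUT : forall u, utility u -> exists v, utility v /\ intertwines T u v)
  (hTU : forall v, utility v -> exists u, utility u /\ intertwines T u v).

Lemma T_point_mass_onto c : exists y, T (point_mass y) = point_mass c.
Proof.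
have [v [[vhomo _] Tcv]] := hUT (utility_cst c).
have := Tcv _ (point_mass_in_M 0).
rewrite /= Tu_cst; last exact/hTM/point_mass_in_M.
by rewrite Tu_two_step ?lexx ?ler01 // => ->; exists (v 0).
Qed.

Lemma T_point_mass y : exists c, T (point_mass y) = point_mass c.
Proof.
have GM := hTM (point_mass_in_M y); have G01 := in_M_range GM.
apply: in_M_point_mass => // c; have [yc Tyc] := T_point_mass_onto c.
have [ycy|yyc] := leP yc y.
  left => t tc; apply/le_anti; case/andP: (G01 t) => -> _; rewrite andbT.
  have := hTmono (point_mass_in_M _) (point_mass_in_M _) (st_le_point_mass ycy) t.
  by rewrite Tyc /two_step tc.
right => t ct; apply/le_anti; case/andP: (G01 t) => _ ->.
have := hTmono (point_mass_in_M _) (point_mass_in_M _) (st_le_point_mass (ltW yyc)) t.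
by rewrite Tyc /two_step ltNge ct.
Qed.

Variables phi psi : R -> R.
Hypotheses (T_point_mass_phi : forall y, T (point_mass y) = point_mass (phi y))
  (psiK : cancel psi phi).

Lemma phi_homo : {homo phi : x y / x <= y}.
Proof.
move=> x y xy.
have := hTmono (point_mass_in_M _) (point_mass_in_M _) (st_le_point_mass xy) (phi y).
by rewrite !T_point_mass_phi /two_step ltxx; case: ltP => // _; rewrite ler10.
Qed.

Lemma intertwines_phi u v : utility u -> utility v -> intertwines T u v ->
  forall x, u (phi x) = phi (v x).
Proof.
move=> [uhomo _] [vhomo _] Tuv x; apply: point_mass_inj.
have := Tuv _ (point_mass_in_M x).
by rewrite /= T_point_mass_phi !Tu_two_step ?lexx ?ler01 // T_point_mass_phi.
Qed.

Lemma phi_strict : {homo phi : x y / x < y}.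
Proof.
move=> a b ab; rewrite lt_neqAle phi_homo ?(ltW ab) // andbT.
apply/negP => /eqP phiab.
have p_lt_q : psi 0 < psi 1.
  by rewrite ltNge; apply/negP => /phi_homo; rewrite !psiK ler10.
have [v [hv _ va vb]] := utility_affine ab p_lt_q.
have [u [hu Tuv]] := hTU hv.
have := intertwines_phi hu hv Tuv a; have := intertwines_phi hu hv Tuv b.
by rewrite va vb !psiK phiab => ->; move/eqP; rewrite oner_eq0.
Qed.

Lemma utility_phi : utility phi.
Proof.
split; first exact: phi_homo.
by apply: homo_surj_continuous phi_homo _ => z; exists (psi z).
Qed.

Let phi_mono : {mono phi : x y / x <= y}. Proof. exact: le_mono phi_strict. Qed.

Let psi_mono : {mono psi : x y / x <= y}.
Proof. by move=> x y; rewrite -phi_mono !psiK. Qed.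

Definition induced_distortion q := T (two_step 0 1 q) (phi 0).

Lemma distortion_induced : distortion induced_distortion.
Proof.
have B01M (q : R) : 0 <= q <= 1 -> in_M (two_step 0 1 q).
  by apply: two_step_in_M; rewrite ler01.
have p01 : phi 0 < phi 1 by apply: phi_strict; rewrite ltr01.
split.
  move=> x y x0 xy y1.
  have x01 : 0 <= x <= 1 by rewrite x0 (le_trans xy y1).
  have y01 : 0 <= y <= 1 by rewrite y1 (le_trans x0 xy).
  exact: hTmono (B01M _ y01) (B01M _ x01) (st_le_two_step_mass 0 1 xy) (phi 0).
split.
  move=> x x0 x1; apply/andP; rewrite /induced_distortion.
  by apply: in_M_range; apply: hTM; apply: B01M; rewrite x0 x1.
rewrite /induced_distortion.
have -> : two_step 0 1 0 = point_mass 1 :> (R -> R).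
  by apply/funext => t; rewrite /two_step; case: (ltP t 0) => t0; case: ltP => //; lra.
have -> : two_step 0 1 1 = point_mass 0 :> (R -> R).
  by apply/funext => t; rewrite /two_step; case: ifP => //; case: ifP.
by rewrite !T_point_mass_phi /two_step ltxx p01.
Qed.

Lemma T_two_step_left a b q : a < b -> 0 <= q <= 1 ->
  T (two_step a b q) (phi a) = induced_distortion q.
Proof.
move=> ab q01.
have [v [hv vstrict v0 v1]] := utility_affine ltr01 ab.
have [u [hu Tuv]] := hTU hv.
have B01M : in_M (two_step 0 1 q) by apply: two_step_in_M; rewrite ?ler01.
have GM := hTM B01M; have G01 := in_M_range GM; have [Ghomo _] := GM.
have -> : T (two_step a b q) = Tu u (T (two_step 0 1 q)).
  by rewrite (Tuv _ B01M) /= Tu_two_step ?v0 ?v1 ?ler01 //; case: hv.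
have uphi := intertwines_phi hu hv Tuv.
apply: Tu_eq_max => // [|z]; first by rewrite uphi v0.
rewrite -[z]psiK uphi phi_mono -v0 (le_mono vstrict).
by rewrite phi_mono.
Qed.

Lemma T_two_step_flat a b q t : a < b -> 0 <= q <= 1 -> phi a <= t < phi b ->
  T (two_step a b q) t = T (two_step a b q) (phi a).
Proof.
move=> ab q01 /andP[at_ tb]; set G := T (two_step a b q).
have BM : in_M (two_step a b q) by apply: two_step_in_M => //; exact: ltW.
have GM := hTM BM; have [Ghomo _] := GM.
apply/le_anti/andP; split; last exact: Ghomo.
set s := psi t; have ts : t = phi s by rewrite psiK.
have sb : s < b by rewrite -(leW_mono phi_mono) -ts.
have as_ : a <= s by rewrite -phi_mono -ts.
(* v collapses [a, s] onto a and fixes b, hence fixes the law T is applied to. *)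
have [v0 [[v0homo v0cont] _ v0s v0b]] := utility_affine sb ab.
pose v z := Num.max a (v0 z).
have hv : utility v.
  split; first by move=> x y xy; apply: le_max2 => //; exact: v0homo.
  by move=> x; apply: continuous_max; [exact: cvg_cst | exact: v0cont].
have va : v a = a by apply/max_idPl; rewrite -[X in _ <= X]v0s; exact: v0homo.
have vs : v s = a by rewrite /v v0s maxxx.
have vb : v b = b by rewrite /v v0b; apply/max_idPr; exact: ltW.
have [u [hu Tuv]] := hTU hv.
have GE : G = Tu u G.
  by rewrite /G (Tuv _ BM) /= Tu_two_step ?va ?vb //; [case: hv | exact: ltW].
rewrite [in X in _ <= X]GE; apply: le_Tu; first by move=> x; case/andP: (in_M_range GM x).
by rewrite ts (intertwines_phi hu hv Tuv) vs.
Qed.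

Lemma T_le_induced F x y : in_M F -> x < y -> T F x <= induced_distortion (F (psi y)).
Proof.
move=> FM xy; have F01 := in_M_range FM; case: (FM) => Fhomo [_ [a [_ [Fa _]]]].
set s := psi y; set a' := Num.min a (psi x) - 1.
have mx : Num.min a (psi x) <= psi x by rewrite ge_min lexx orbT.
have ma : Num.min a (psi x) <= a by rewrite ge_min lexx.
have a'x : a' < psi x by rewrite /a'; lra.
have a'a : a' < a by rewrite /a'; lra.
have a's : a' < s by apply: lt_trans a'x _; rewrite (leW_mono psi_mono).
have st : st_le (two_step a' s (F s)) F.
  move=> z; rewrite /two_step; case: ltP => za; first by rewrite Fa // (lt_trans za a'a).
  by case: ltP => zs; [exact: Fhomo (ltW zs) | case/andP: (F01 z)].
apply: le_trans (hTmono (two_step_in_M (ltW a's) (F01 s)) FM st x) _.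
rewrite T_two_step_flat ?T_two_step_left //.
by rewrite -{1}(psiK x) phi_mono (ltW a'x) /s psiK.
Qed.

Lemma induced_le_T F y : in_M F -> induced_distortion (F (psi y)) <= T F y.
Proof.
move=> FM; have F01 := in_M_range FM; case: (FM) => Fhomo [_ [_ [b [_ Fb]]]].
set s := psi y; set b' := Num.max b s + 1.
have sm : s <= Num.max b s by rewrite le_max lexx orbT.
have bm : b <= Num.max b s by rewrite le_max lexx.
have sb' : s < b' by rewrite /b'; lra.
have bb' : b < b' by rewrite /b'; lra.
have st : st_le F (two_step s b' (F s)).
  move=> z; rewrite /two_step; case: ltP => zs; first by case/andP: (F01 z).
  by case: ltP => zb; [exact: Fhomo | rewrite Fb // ltW // (lt_le_trans bb' zb)].
have := hTmono FM (two_step_in_M (ltW sb') (F01 s)) st y.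
by rewrite -{1}(psiK y) T_two_step_left.
Qed.

Lemma T_eq_Td_Tu F : in_M F -> T F = Td induced_distortion (Tu phi F).
Proof.
move=> FM; have F01 := in_M_range FM; have [Fhomo _] := FM; have [_ [Grc _]] := hTM FM.
have hd := distortion_induced.
have Hhomo : {homo F \o psi : x y / x <= y} by move=> x y; rewrite /= -psi_mono; exact: Fhomo.
have H01 x : 0 <= (F \o psi) x <= 1 by exact: F01.
rewrite (Tu_strict_cancel phi_strict psiK Fhomo F01).
apply/funext => x; apply/le_anti/andP; split.
  by apply: (le_Td hd Hhomo H01) => y; exact: T_le_induced.
rewrite -[T F x](cvg_lim _ (Grc x)) //; apply: limr_ge; first exact: cvgP _ (Grc x).
near=> y; apply: le_trans (induced_le_T y FM); apply: (Td_le hd Hhomo H01).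
by near: y; exact: nbhs_right_gt.
Unshelve. all: end_near.
Qed.

End Necessity.

Theorem theorem3 (R : realType) (T : (R -> R) -> (R -> R))
  (hTM : forall F, in_M F -> in_M (T F))
  (hTmono : monotone_op T) :
  UT_eq_TU T <->
  exists (d u : R -> R),
    [/\ distortion d, utility u,
        (forall x y, x < y -> u x < u y),
        (forall z, exists x, u x = z) &
        eq_on_M T (fun F => Td d (Tu u F))].
Proof.
split=> [[hUT hTU]|[d [u [hd hu ustrict usurj hT]]]]; last first.
  have [psi psiK] := choice usurj.
  exact: UT_eq_TU_Td_Tu hd hu ustrict psiK T hT.
have [phi T_point_mass_phi] := choice (T_point_mass hTM hTmono hUT).
have phi_onto z : exists y, phi y = z.
  have [y Ty] := T_point_mass_onto hTM hUT z.
  by exists y; apply: point_mass_inj; rewrite -T_point_mass_phi.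
have [psi psiK] := choice phi_onto.
exists (induced_distortion T phi), phi; split.
- exact: (distortion_induced hTM hTmono hTU T_point_mass_phi psiK).
- exact: (utility_phi hTmono T_point_mass_phi psiK).
- exact: (phi_strict hTmono hTU T_point_mass_phi psiK).
- exact: phi_onto.
- exact: (T_eq_Td_Tu hTM hTmono hTU T_point_mass_phi psiK).
Qed.
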